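(* Consider a Fisher market with agents $N$, budgets $b_i>0$ for $i\in N$, indivisible items $M$, and monotone preferences $\preceq_i$. For every competitive equilibrium $(\mathcal S,p)$ such that $S_i\ne\emptyset$ for every $i\in N$, there exists a price vector $p'$ such that $(\mathcal S,p')$ is a competitive equilibrium and $p'$ is budget-exhausting, i.e., $p'(S_i)=b_i$ for every $i\in N$.
   Context: A monotone preference $\preceq_i$ is a complete and transitive weak order over all subsets of $M$ such that $S\preceq_i T$ whenever $S\subseteq T$; $S\prec_i T$ means $S\preceq_i T$ and not $T\preceq_i S$. For prices $p$, $p(S)=\sum_{j\in S}p_j$. A bundle $S$ is demanded by agent $i$ if $p(S)\le b_i$ and $p(T)>b_i$ for every $T$ with $S\prec_i T$. A competitive equilibrium is a pair $(\mathcal S,p)$ with $\mathcal S=(S_i)_{i\in N}$ a partition of all of $M$ among the agents such that each $S_i$ is demanded by agent $i$ at prices $p$. *)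

From mathcomp Require Import all_boot all_order all_algebra.
Set Implicit Arguments. Unset Strict Implicit. Unset Printing Implicit Defensive.
Import Order.TTheory GRing.Theory Num.Theory.
Local Open Scope ring_scope.

Section Market.
Variables (R : realFieldType) (N M : finType).

Definition monotone_pref (pref : rel {set M}) : Prop :=
  (forall S T : {set M}, pref S T || pref T S) /\
  (forall S T U : {set M}, pref S T -> pref T U -> pref S U) /\
  (forall S T : {set M}, S \subset T -> pref S T).

Definition strict_pref (pref : rel {set M}) (S T : {set M}) : bool :=
  pref S T && ~~ pref T S.

Definition price_vector (p : M -> R) : Prop := forall j, 0 <= p j.

Definition price (p : M -> R) (S : {set M}) : R := \sum_(j in S) p j.

Definition demanded (pref : rel {set M}) (bi : R) (p : M -> R) (S : {set M})
  : Prop :=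
  price p S <= bi /\ forall T : {set M}, strict_pref pref S T -> bi < price p T.

Definition is_allocation (S : N -> {set M}) : Prop :=
  (forall i k, i != k -> [disjoint S i & S k]) /\
  (forall j : M, exists i, j \in S i).

Definition competitive_equilibrium (pref : N -> rel {set M}) (b : N -> R)
  (S : N -> {set M}) (p : M -> R) : Prop :=
  is_allocation S /\ price_vector p /\ forall i, demanded (pref i) (b i) p (S i).

End Market.

From mathcomp Require Import all_boot all_order all_algebra.
Set Implicit Arguments. Unset Strict Implicit. Unset Printing Implicit Defensive.
Import Order.TTheory GRing.Theory Num.Theory.
Local Open Scope ring_scope.

(* Raising prices never makes a strictly preferred bundle affordable, so a
   demanded bundle stays demanded as long as it remains affordable.  Hence it
   suffices to add to the price of each item of S_i an equal share of agent i's
   unspent budget b_i - p(S_i); this needs S_i nonempty. *)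

Section RaisePrices.
Variables (R : realFieldType) (M : finType).

Lemma priceD (p q : M -> R) (T : {set M}) :
  price (p \+ q) T = price p T + price q T.
Proof. exact: big_split. Qed.

Lemma ler_price (p q : M -> R) (T : {set M}) :
  (forall j, p j <= q j) -> price p T <= price q T.
Proof. by move=> lepq; apply: ler_sum => j _. Qed.

Lemma demanded_raise_prices (pref : rel {set M}) (bi : R) (p q : M -> R)
    (T : {set M}) :
  (forall j, p j <= q j) -> price q T <= bi ->
  demanded pref bi p T -> demanded pref bi q T.
Proof.
move=> lepq qT_le [_ dem]; split=> // U prefTU.
exact: lt_le_trans (dem U prefTU) (ler_price U lepq).
Qed.

End RaisePrices.

Section SpreadSurplus.
Variables (R : realFieldType) (N M : finType) (S : N -> {set M}).
Hypothesis S_disjoint : forall i k, i != k -> [disjoint S i & S k].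

Definition spread (e : N -> R) (j : M) : R :=
  \sum_(k | j \in S k) e k / #|S k|%:R.

Lemma spread_owner (e : N -> R) i j : j \in S i -> spread e j = e i / #|S i|%:R.
Proof.
move=> jSi; rewrite /spread (big_pred1 i) // => k /=.
have [->|ki] := eqVneq k i; first by rewrite jSi.
have ik : i != k by rewrite eq_sym.
by rewrite (disjointFr (S_disjoint ik) jSi); apply/esym/negbTE.
Qed.

Lemma spread_ge0 (e : N -> R) j : (forall k, 0 <= e k) -> 0 <= spread e j.
Proof. by move=> e_ge0; apply: sumr_ge0 => k _; rewrite divr_ge0 ?ler0n. Qed.

Lemma price_spread (e : N -> R) i : S i != set0 -> price (spread e) (S i) = e i.
Proof.
move=> Si_ne0; rewrite /price (eq_bigr _ (@spread_owner e i)).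
by rewrite sumr_const -[_ *+ _]mulr_natr divfK // pnatr_eq0 cards_eq0.
Qed.

End SpreadSurplus.

Theorem mainTheorem6 (R : realFieldType) (N M : finType)
  (b : N -> R) (pref : N -> rel {set M})
  (hb : forall i, 0 < b i)
  (hpref : forall i, monotone_pref (pref i))
  (S : N -> {set M}) (p : M -> R)
  (hCE : competitive_equilibrium pref b S p)
  (hne : forall i, S i != set0) :
  exists p' : M -> R,
    competitive_equilibrium pref b S p' /\ (forall i, price p' (S i) = b i).
Proof.
case: hCE => [[S_disjoint S_cover] [p_ge0 dem]].
pose surplus k := b k - price p (S k).
have surplus_ge0 k : 0 <= surplus k by rewrite subr_ge0; case: (dem k).
pose p' := p \+ spread S surplus.
have le_p_p' j : p j <= p' j by rewrite lerDl spread_ge0.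
have exhausted i : price p' (S i) = b i.
  by rewrite priceD price_spread // addrC subrK.
exists p'; split=> //; split=> //; split.
- by move=> j; apply: le_trans (le_p_p' j).
- by move=> i; apply: demanded_raise_prices (dem i); rewrite ?exhausted.
Qed.
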